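(* Let the perturbation parameters $\delta_i^j\ge0$ satisfy $0<\delta^1\le\delta^2\le\dots\le\delta^S$, where $\delta^j:=\sum_{i=1}^C\delta_i^j$. Let $t\mapsto\zeta(t)=(\xi(t),\eta(t))$, $t\in I$, be a solution of $(\mathrm P_\delta)$ such that for all $t\in I$: $\epsilon(t)\neq0$; $n^j(t)\neq0$ and $V^j(t)>0$ for $j=1,\dots,S$; $L^j(t)>0$ and $f_{\mathrm{holdup}}'(L^j(t))\neq0$ for $j=1,\dots,S-1$; and $\partial_Tf_{\mathrm{hl}}(T^j(t),\mathbf x^j(t))\neq0$ for $j=1,\dots,S$. Then the Jacobian $D_\eta g_\delta(\zeta(t))$ is non-singular for every $t\in I$. Moreover, along the solution, $\sum_{i=1}^Cy_i^j=1+\delta^j-\frac{1}{V^j}\Big(\sum_{k=1}^{j}L^k\delta^k-\sum_{k=1}^{j-1}V^k(\delta^k-\delta^{k+1})\Big)$ for $j=1,\dots,S-1$, and $\sum_{i=1}^Cy_i^S=1+\delta^S-\frac{1}{\epsilon V^S}\Big(\sum_{k=1}^{S-1}L^k\delta^k-\sum_{k=1}^{S-1}V^k(\delta^k-\delta^{k+1})\Big)$.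
   Context: Fix integers $S\ge 2$, $C\ge 2$ and an interval $I\subset\mathbb R$. Given are continuously differentiable real functions $f_{\mathrm{vle},i}(P,T,\mathbf x)$ ($i=1,\dots,C$), $f_{\mathrm{hl}}(T,\mathbf x)$, $f_{\mathrm{hv}}(T,\mathbf y)$, $f_{\mathrm{holdup}}(L)$. Controls are continuously differentiable real functions $\epsilon,P,Q,T^{\mathrm{cond}}$ on $I$. State variables: $n^j,H^j,T^j,V^j$, $\mathbf x^j,\mathbf y^j\in\mathbb R^C$ ($j=1,\dots,S$), $L^j$ ($j=1,\dots,S-1$); a solution is a tuple of continuously differentiable state functions satisfying all equations at every $t\in I$. ''$2\le j\le S-1$'' marks middle-stage equations. For parameters $\delta_i^j\ge0$, the system $(\mathrm P_\delta)$ consists of: (TM) $\dot n^1=L^1-V^1$; $\dot n^j=L^j-V^j-L^{j-1}+V^{j-1}$ ($2\le j\le S-1$); $\dot n^S=-\epsilon V^S-L^{S-1}+V^{S-1}$; (CM$_\delta$) for $i=1,\dots,C-1$: $\dot x_i^1=\big(L^1(x_i^2-x_i^1-\delta_i^1)-V^1(y_i^1-x_i^1-\delta_i^1)\big)/n^1$; $\dot x_i^j=\big(L^j(x_i^{j+1}-x_i^j-\delta_i^j)-V^j(y_i^j-x_i^j-\delta_i^j)+V^{j-1}(y_i^{j-1}-x_i^j-\delta_i^j)\big)/n^j$ ($2\le j\le S-1$); $\dot x_i^S=\big(\epsilon V^S(x_i^S+\delta_i^S-y_i^S)+V^{S-1}(y_i^{S-1}-x_i^S-\delta_i^S)\big)/n^S$;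 (EB) $\dot H^1=L^1f_{\mathrm{hl}}(T^2,\mathbf x^2)-V^1f_{\mathrm{hv}}(T^1,\mathbf y^1)+Q$; $\dot H^j=L^jf_{\mathrm{hl}}(T^{j+1},\mathbf x^{j+1})-V^jf_{\mathrm{hv}}(T^j,\mathbf y^j)-L^{j-1}f_{\mathrm{hl}}(T^j,\mathbf x^j)+V^{j-1}f_{\mathrm{hv}}(T^{j-1},\mathbf y^{j-1})$ ($2\le j\le S-1$); $\dot H^S=(1-\epsilon)V^Sf_{\mathrm{hl}}(T^{\mathrm{cond}},\mathbf y^S)-V^Sf_{\mathrm{hv}}(T^S,\mathbf y^S)-L^{S-1}f_{\mathrm{hl}}(T^S,\mathbf x^S)+V^{S-1}f_{\mathrm{hv}}(T^{S-1},\mathbf y^{S-1})$; and the algebraic equations $g_\delta=0$, where $\mathrm{aux}^1_\delta=\sum_{i=1}^C\big(L^1(x_i^2-x_i^1-\delta_i^1)-V^1(y_i^1-x_i^1-\delta_i^1)\big)/n^1$; for $2\le j\le S-1$, $\mathrm{aux}^j_\delta=\sum_{i=1}^C\big(L^j(x_i^{j+1}-x_i^j-\delta_i^j)-V^j(y_i^j-x_i^j-\delta_i^j)+V^{j-1}(y_i^{j-1}-x_i^j-\delta_i^j)\big)/n^j$; $\mathrm{aux}^S_\delta=\sum_{i=1}^C\big(\epsilon V^S(x_i^S+\delta_i^S-y_i^S)+V^{S-1}(y_i^{S-1}-x_i^S-\delta_i^S)\big)/n^S$; $\mathrm{ydef}_i^j=y_i^j-f_{\mathrm{vle},i}(P,T^j,\mathbf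 x^j)$; $\mathrm{edef}^j=H^j-n^jf_{\mathrm{hl}}(T^j,\mathbf x^j)$; $\mathrm{xsum}^j=x_C^j-1+\sum_{i=1}^{C-1}x_i^j$; $\mathrm{hold}^j=n^j-f_{\mathrm{holdup}}(L^{j-1})$ ($j=2,\dots,S$); collected as $g_\delta=(\mathrm{aux}^S_\delta,\dots,\mathrm{aux}^1_\delta,\mathbf{ydef}^1,\dots,\mathbf{ydef}^S,\mathrm{edef}^1,\dots,\mathrm{edef}^S,\mathrm{xsum}^1,\dots,\mathrm{xsum}^S,\mathrm{hold}^2,\dots,\mathrm{hold}^S)$ with $\mathbf{ydef}^j=(\mathrm{ydef}^j_1,\dots,\mathrm{ydef}^j_C)$. Differential variables $\xi=(n^1,\dots,n^S,\hat{\mathbf x}^1,\dots,\hat{\mathbf x}^S,H^1,\dots,H^S)$, $\hat{\mathbf x}^j=(x_1^j,\dots,x_{C-1}^j)$; algebraic variables $\eta=(V^S,\dots,V^1,\mathbf y^1,\dots,\mathbf y^S,T^1,\dots,T^S,x_C^1,\dots,x_C^S,L^1,\dots,L^{S-1})$. $D_\eta g_\delta$ is the Jacobian of $g_\delta$ with respect to $\eta$ (with $\xi$ and the controls held fixed). *)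

From HB Require Import structures.
From mathcomp Require Import all_boot all_order all_algebra.
From mathcomp Require Import all_classical all_reals all_analysis.
Set Implicit Arguments. Unset Strict Implicit. Unset Printing Implicit Defensive.
Import Order.TTheory GRing.Theory Num.Theory.
Import numFieldNormedType.Exports.
Local Open Scope ring_scope.
Local Open Scope classical_set_scope.

(* f' is the derivative of f on the set I, the difference quotient being
   taken within I (one-sided at endpoints of an interval). *)
Definition deriv_on {R : realType} (I : set R) (f f' : R -> R) : Prop :=
  forall t, I t ->
    (fun h : R => h^-1 * (f (t + h) - f t)) @ within [set h | I (t + h)] (0 : R)^'
      --> f' t.

Definition C1_on {R : realType} (I : set R) (f : R -> R) : Prop :=
  exists f', deriv_on I f f' /\ {within I, continuous f'}.

Definition C1 {R : realType} {V : normedModType R} (f : V -> R) : Prop :=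
  (forall p, differentiable f p) /\ (forall v : V, continuous (fun p => 'd f p v)).

(* Stages are indexed by nat j = 1..S, components by nat i = 1..C.       *)

Unset Implicit Arguments.
Section Model.
Variables (R : realType) (S C : nat).

Record state := State {
  st_n : nat -> R; st_H : nat -> R; st_T : nat -> R; st_V : nat -> R;
  st_L : nat -> R; st_x : nat -> nat -> R; st_y : nat -> nat -> R }.

Variables (f_vle : nat -> R * R * 'rV[R]_C -> R)   (* f_vle,i (P, T, x) *)
          (f_hl : R * 'rV[R]_C -> R)
          (f_hv : R * 'rV[R]_C -> R)
          (f_holdup : R -> R)
          (delta : nat -> nat -> R).               (* delta j i = delta_i^j *)

Definition xvec_of (z : state) j : 'rV[R]_C := \row_(i < C) st_x z j i.+1.
Definition yvec_of (z : state) j : 'rV[R]_C := \row_(i < C) st_y z j i.+1.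

Definition dsum j : R := \sum_(1 <= i < C.+1) delta j i.

(* numerator of the right-hand side of (CM_delta) for x_i^j *)
Definition cmterm (z : state) (eps : R) j i : R :=
  let L := st_L z in let V := st_V z in let x := st_x z in let y := st_y z in
  if j == 1%N then
    L 1%N * (x 2%N i - x 1%N i - delta 1%N i) - V 1%N * (y 1%N i - x 1%N i - delta 1%N i)
  else if j == S then
    eps * V S * (x S i + delta S i - y S i) + V S.-1 * (y S.-1 i - x S i - delta S i)
  else
    L j * (x j.+1 i - x j i - delta j i) - V j * (y j i - x j i - delta j i)
    + V j.-1 * (y j.-1 i - x j i - delta j i).

(* right-hand sides of (TM), (CM_delta), (EB) *)
Definition rhs_n (z : state) (eps : R) j : R :=
  let L := st_L z in let V := st_V z in
  if j == 1%N then L 1%N - V 1%N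
  else if j == S then - eps * V S - L S.-1 + V S.-1
  else L j - V j - L j.-1 + V j.-1.

Definition rhs_x (z : state) (eps : R) j i : R := cmterm z eps j i / st_n z j.

Definition rhs_H (z : state) (eps Q Tcond : R) j : R :=
  let L := st_L z in let V := st_V z in let T := st_T z in
  if j == 1%N then
    L 1%N * f_hl (T 2%N, xvec_of z 2%N) - V 1%N * f_hv (T 1%N, yvec_of z 1%N) + Q
  else if j == S then
    (1 - eps) * V S * f_hl (Tcond, yvec_of z S) - V S * f_hv (T S, yvec_of z S)
    - L S.-1 * f_hl (T S, xvec_of z S) + V S.-1 * f_hv (T S.-1, yvec_of z S.-1)
  else
    L j * f_hl (T j.+1, xvec_of z j.+1) - V j * f_hv (T j, yvec_of z j)
    - L j.-1 * f_hl (T j, xvec_of z j) + V j.-1 * f_hv (T j.-1, yvec_of z j.-1).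

(* components of the algebraic equations g_delta *)
Definition aux (z : state) (eps : R) j : R :=
  (\sum_(1 <= i < C.+1) cmterm z eps j i) / st_n z j.
Definition ydef (z : state) (P : R) j i : R :=
  st_y z j i - f_vle i (P, st_T z j, xvec_of z j).
Definition edef (z : state) j : R := st_H z j - st_n z j * f_hl (st_T z j, xvec_of z j).
Definition xsum (z : state) j : R := st_x z j C - 1 + \sum_(1 <= i < C) st_x z j i.
Definition hold (z : state) j : R := st_n z j - f_holdup (st_L z j.-1).

(* Index type shared by the components of g_delta and of eta:
     inl(inl(inl(inl j)))      : aux^(j+1)          <-> V^(j+1)
     inl(inl(inl(inr (j,i))))  : ydef^(j+1)_(i+1)   <-> y^(j+1)_(i+1)
     inl(inl(inr j))           : edef^(j+1)         <-> T^(j+1)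
     inl(inr j)                : xsum^(j+1)         <-> x_C^(j+1)
     inr k                     : hold^(k+2)         <-> L^(k+1)            *)
Definition Idx := ('I_S + 'I_S * 'I_C + 'I_S + 'I_S + 'I_S.-1)%type.

Definition gcomp (eps P : R) (r : Idx) (z : state) : R :=
  match r with
  | inl (inl (inl (inl j))) => aux z eps j.+1
  | inl (inl (inl (inr (j, i)))) => ydef z P j.+1 i.+1
  | inl (inl (inr j)) => edef z j.+1
  | inl (inr j) => xsum z j.+1
  | inr k => hold z k.+2
  end.

Definition upd (f : nat -> R) j (s : R) : nat -> R :=
  fun k => if k == j then f k + s else f k.
Definition upd2 (f : nat -> nat -> R) j i (s : R) : nat -> nat -> R :=
  fun k l => if (k == j) && (l == i) then f k l + s else f k l.

(* move the algebraic (eta) coordinate c by s, xi held fixed *)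
Definition bump (c : Idx) (s : R) (z : state) : state :=
  let: State n H T V L x y := z in
  match c with
  | inl (inl (inl (inl j))) => State n H T (upd V j.+1 s) L x y
  | inl (inl (inl (inr (j, i)))) => State n H T V L x (upd2 y j.+1 i.+1 s)
  | inl (inl (inr j)) => State n H (upd T j.+1 s) V L x y
  | inl (inr j) => State n H T V L (upd2 x j.+1 C s) y
  | inr k => State n H T V (upd L k.+1 s) x y
  end.

Definition jac_eta (eps P : R) (z : state) : 'M[R]_#|{: Idx}| :=
  \matrix_(r, c)
    (fun s : R => gcomp eps P (enum_val r) (bump (enum_val c) s z))^`() 0.

End Model.
Arguments State {R}.
Arguments st_n {R}.
Arguments st_H {R}.
Arguments st_T {R}.
Arguments st_V {R}.
Arguments st_L {R}.
Arguments st_x {R}.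
Arguments st_y {R}.
Arguments xvec_of {R}.
Arguments yvec_of {R}.
Arguments dsum {R}.
Arguments cmterm {R}.
Arguments rhs_n {R}.
Arguments rhs_x {R}.
Arguments rhs_H {R}.
Arguments aux {R}.
Arguments ydef {R}.
Arguments edef {R}.
Arguments xsum {R}.
Arguments hold {R}.
Arguments gcomp {R}.
Arguments upd {R}.
Arguments upd2 {R}.
Arguments bump {R}.
Arguments jac_eta {R}.
Set Implicit Arguments.

From Pilot Require Import Defs.
From HB Require Import structures.
From mathcomp Require Import all_boot all_order all_algebra.
From mathcomp Require Import all_classical all_reals all_analysis.
From mathcomp Require Import ring lra.
Set Implicit Arguments. Unset Strict Implicit. Unset Printing Implicit Defensive.
Import Order.TTheory GRing.Theory Num.Theory.
Import numFieldNormedType.Exports.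
Local Open Scope ring_scope.
Local Open Scope classical_set_scope.

(* On a solution the algebraic equations give sum_i x_i^j = 1 and make the
   component balances sum to zero stage by stage.  Summed over the components,
   the balance of stage j expresses V^j (sum_i y_i^j - 1 - delta^j) through the
   same quantity at stage j - 1, and the recursion telescopes to the stated
   formulas.  Their bracket sum_k L^k delta^k - sum_k V^k (delta^k - delta^(k+1))
   is positive because delta^1 > 0 and delta^j is nondecreasing, so
   sum_i y_i^j - 1 - delta^j never vanishes.
   Ordering eta as (x_C, L), T, y, V^1, ..., V^S makes D_eta g_delta lower
   triangular.  Its diagonal entries are 1 (xsum, ydef), -n^j d_T f_hl (edef),
   -f_holdup' (hold) and, for aux^j, a nonzero multiple of
   sum_i y_i^j - 1 - delta^j; hence the Jacobian is nonsingular. *)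

(* [M] is lower triangular once the indices are sorted by the grade [h]. *)
Lemma graded_det_neq0 (F : fieldType) n (M : 'M[F]_n) (h : 'I_n -> nat) :
  (forall i, M i i != 0) -> (forall i j, j != i -> (h i <= h j)%N -> M i j = 0) ->
  \det M != 0.
Proof.
move=> Mii Mij; rewrite -det_tr; apply/negP => /det0P[v /eqP v_neq0 vM0].
apply: v_neq0; suff v0 k i : (h i < k)%N -> v 0 i = 0.
  by apply/rowP => i; rewrite mxE (v0 (h i).+1).
elim: k i => // k IH i hik; have /rowP/(_ i) := vM0.
rewrite !mxE (bigD1 i) //= big1 => [|j ji]; rewrite !mxE.
  by rewrite addr0 => /eqP; rewrite mulf_eq0 (negbTE (Mii i)) orbF => /eqP.
case: (leqP (h i) (h j)) => [hij | hji]; first by rewrite Mij ?mulr0.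
by rewrite IH ?mul0r // (leq_trans hji).
Qed.

Lemma forall_stage S (P : nat -> Prop) :
  (forall j : 'I_S, P j.+1) -> forall j, (0 < j <= S)%N -> P j.
Proof. by move=> hP [//|j] jS; exact: (hP (Ordinal jS)). Qed.

Section Derivatives.
Variable R : realType.

Lemma derive1_affine (c b : R) : (fun s => c + b * s)^`() 0 = b.
Proof.
rewrite derive1E deriveD // derive_cst add0r -derive1E derive1Ml //.
by rewrite derive1E derive_id mulr1.
Qed.

Lemma derive1_shift (f : R -> R) (a c b : R) : derivable f a 1 ->
  (fun s => c + b * f (a + s))^`() 0 = b * f^`()%classic a.
Proof.
(* The difference quotients of [fun s => f (s + a)] at [0] are those of [f] at [a]. *)
have quotE (g : R -> R) : (fun h : R => h^-1 *: (f (g h + 0 + a) - f (0 + a))) =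
    (fun h : R => h^-1 *: (f (g h + a) - f a)) by apply/funext => h; rewrite addr0 add0r.
move=> df; have fa : derivable (fun s => f (s + a)) 0 1.
  by rewrite /derivable /= (quotE ( *:%R^~ 1)).
rewrite (_ : (fun s => _) = cst c + (fun s => b * f (s + a))); last first.
  by apply/funext => s; rewrite /= (addrC a).
rewrite derive1E deriveD //; last exact: derivableM.
by rewrite derive_cst add0r -derive1E derive1Ml // /derive1 /= (quotE id).
Qed.

Lemma C1_derivable (f : R -> R) a : C1 f -> derivable f a 1.
Proof. by case=> df _; apply/derivable1_diffP. Qed.

Lemma C1_derivable_fst C (f : R * 'rV[R]_C -> R) (v : 'rV[R]_C) a :
  C1 f -> derivable (fun s => f (s, v)) a 1.
Proof.
case=> df _; apply/derivable1_diffP.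
by apply: (@differentiable_comp _ _ _ _ (fun s : R => (s, v))); [apply: differentiable_pair|].
Qed.

End Derivatives.

Section VapourBalance.
Variables (R : realType) (S C : nat) (delta : nat -> nat -> R) (e : R).
Local Notation D := (dsum C delta).

Definition total_x (z : state R) j := \sum_(1 <= i < C.+1) st_x z j i.
Definition total_y (z : state R) j := \sum_(1 <= i < C.+1) st_y z j i.

Definition pert_flux (z : state R) a b :=
  \sum_(1 <= k < a) st_L z k * D k - \sum_(1 <= k < b) st_V z k * (D k - D k.+1).

Lemma sum_scaled_diff (a : R) (p q d : nat -> R) :
  \sum_(1 <= i < C.+1) a * (p i - q i - d i) =
  a * (\sum_(1 <= i < C.+1) p i - \sum_(1 <= i < C.+1) q i - \sum_(1 <= i < C.+1) d i).
Proof. by rewrite -mulr_sumr !sumrB. Qed.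

Lemma sum_cmterm_first z :
  \sum_(1 <= i < C.+1) cmterm S delta z e 1 i =
  st_L z 1 * (total_x z 2 - total_x z 1 - D 1)
  - st_V z 1 * (total_y z 1 - total_x z 1 - D 1).
Proof. by rewrite sumrB !sum_scaled_diff. Qed.

Lemma sum_cmterm_mid z j : j != 1%N -> j != S ->
  \sum_(1 <= i < C.+1) cmterm S delta z e j i =
  st_L z j * (total_x z j.+1 - total_x z j - D j)
  - st_V z j * (total_y z j - total_x z j - D j)
  + st_V z j.-1 * (total_y z j.-1 - total_x z j - D j).
Proof.
by move=> /negbTE j1 /negbTE jS; rewrite /cmterm j1 jS big_split sumrB !sum_scaled_diff.
Qed.

Lemma sum_cmterm_last z : S != 1%N ->
  \sum_(1 <= i < C.+1) cmterm S delta z e S i =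
  - (e * st_V z S) * (total_y z S - total_x z S - D S)
  + st_V z S.-1 * (total_y z S.-1 - total_x z S - D S).
Proof.
move=> /negbTE S1; rewrite /cmterm S1 eqxx big_split /= -!sum_scaled_diff.
by congr (_ + _); apply: eq_bigr => i _; ring.
Qed.

Lemma total_x_xsum z j : (0 < C)%N -> xsum C z j = 0 -> total_x z j = 1.
Proof. by move=> C0; rewrite /xsum /total_x big_nat_recr //=; lra. Qed.

Hypothesis dsum1_gt0 : 0 < D 1.
Hypothesis dsum_homo : forall k, (0 < k < S)%N -> D k <= D k.+1.

Lemma dsum_gt0 k : (0 < k <= S)%N -> 0 < D k.
Proof.
elim: k => // -[_ | k IH /andP[_ kS]] //.
by rewrite (lt_le_trans (IH (ltnW kS))) ?dsum_homo.
Qed.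

Section Stationary.
Variable z : state R.
Hypothesis S_ge2 : (2 <= S)%N.
Hypothesis total_x1 : forall j, (0 < j <= S)%N -> total_x z j = 1.
Hypothesis cmterm_sum0 :
  forall j, (0 < j <= S)%N -> \sum_(1 <= i < C.+1) cmterm S delta z e j i = 0.
Hypothesis L_gt0 : forall k, (0 < k < S)%N -> 0 < st_L z k.
Hypothesis V_gt0 : forall k, (0 < k <= S)%N -> 0 < st_V z k.

Lemma pert_flux_recrL a b : (0 < a)%N ->
  pert_flux z a.+1 b = pert_flux z a b + st_L z a * D a.
Proof. by move=> a0; rewrite /pert_flux big_nat_recr //=; ring. Qed.

Lemma pert_flux_recrV a b : (0 < b)%N ->
  pert_flux z a b.+1 = pert_flux z a b - st_V z b * (D b - D b.+1).
Proof. by move=> b0; rewrite /pert_flux big_nat_recr //=; ring. Qed.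

Lemma excess_stage j : (0 < j < S)%N ->
  st_V z j * (total_y z j - 1 - D j) = - pert_flux z j.+1 j.
Proof.
elim: j => // n IH /andP[_ nS]; case: n IH nS => [_ _ | k IH kS].
  have := @cmterm_sum0 1 (ltnW S_ge2).
  rewrite sum_cmterm_first !total_x1 ?S_ge2 ?(ltnW S_ge2) //.
  by rewrite /pert_flux big_nat1 big_geq //; lra.
have := @cmterm_sum0 k.+2 (ltnW kS).
rewrite sum_cmterm_mid ?(ltn_eqF kS) //= !total_x1 ?kS ?(ltnW kS) //.
by rewrite pert_flux_recrL // pert_flux_recrV //; have := IH (ltnW kS); lra.
Qed.

Lemma excess_last : e * st_V z S * (total_y z S - 1 - D S) = - pert_flux z S S.
Proof.
have S0 : (0 < S)%N by exact: ltnW.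
have S1 : (0 < S.-1 < S)%N by rewrite ltn_predL S0 andbT -ltnS prednK.
have SS : (0 < S <= S)%N by rewrite S0 leqnn.
have := excess_stage S1; rewrite prednK //.
have := @cmterm_sum0 S SS; rewrite sum_cmterm_last ?gtn_eqF // !total_x1 //.
have := pert_flux_recrV S (andP S1).1; rewrite prednK //; lra.
Qed.

Lemma total_y_stage j : (0 < j < S)%N -> st_V z j != 0 ->
  total_y z j = 1 + D j - (st_V z j)^-1 * pert_flux z j.+1 j.
Proof.
by move=> hj V0; rewrite -[pert_flux z j.+1 j]opprK -excess_stage // mulrN mulKf //; ring.
Qed.

Lemma total_y_last : e * st_V z S != 0 ->
  total_y z S = 1 + D S - (e * st_V z S)^-1 * pert_flux z S S.
Proof.
by move=> eV0; rewrite -[pert_flux z S S]opprK -excess_last mulrN mulKf //; ring.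
Qed.

Lemma pert_flux_gt0 a b : (1 < a <= S)%N -> (b <= S)%N -> 0 < pert_flux z a b.
Proof.
case/andP=> a1 aS bS; rewrite /pert_flux.
have L1 : 0 < st_L z 1 * D 1 by rewrite mulr_gt0 ?L_gt0 ?(leq_trans a1 aS).
have Lrest : 0 <= \sum_(2 <= k < a) st_L z k * D k.
  rewrite big_nat_cond; apply: sumr_ge0 => k /andP[/andP[k2 ka] _].
  have kS : (k < S)%N := leq_trans ka aS.
  by rewrite mulr_ge0 // ltW ?L_gt0 ?dsum_gt0 ?(ltnW k2) ?kS ?(ltnW kS).
have Vpart : \sum_(1 <= k < b) st_V z k * (D k - D k.+1) <= 0.
  rewrite big_nat_cond; apply: sumr_le0 => k /andP[/andP[k1 kb] _].
  rewrite pmulr_rle0 ?V_gt0 ?k1 ?(ltnW (leq_trans kb bS)) //.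
  by rewrite subr_le0 dsum_homo // k1 (leq_trans kb bS).
by rewrite big_ltn //; lra.
Qed.

Lemma excess_neq0 j : (0 < j <= S)%N -> total_y z j - 1 - D j != 0.
Proof.
case/andP=> j0; rewrite leq_eqVlt => /orP[/eqP-> | jS]; apply/eqP => E0.
  have := @pert_flux_gt0 S S; rewrite S_ge2 leqnn => /(_ isT isT).
  by have := excess_last; rewrite E0; lra.
have := @pert_flux_gt0 j.+1 j; rewrite ltnS j0 jS (ltnW jS) => /(_ isT isT).
by have := @excess_stage j; rewrite j0 jS E0 => /(_ isT); lra.
Qed.

End Stationary.
End VapourBalance.

Section Jacobian.
Variables (R : realType) (S C : nat) (f_vle : nat -> R * R * 'rV[R]_C -> R)
  (f_hl : R * 'rV[R]_C -> R) (f_holdup : R -> R) (delta : nat -> nat -> R)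
  (e p : R) (z : state R).
Local Notation G := (gcomp S C f_vle f_hl f_holdup delta e p).

Local Notation idxV j := (inl (inl (inl (inl j)))).
Local Notation idxY j i := (inl (inl (inl (inr (j, i))))).
Local Notation idxT j := (inl (inl (inr j))).
Local Notation idxX j := (inl (inr j)).
Local Notation idxL k := (inr k).

Definition jac_entry (r c : Idx S C) : R :=
  (fun s => G r (Defs.bump S C c s z))^`()%classic 0.

(* A component of g_delta depends on the eta-coordinate with the same index and
   otherwise only on coordinates of smaller grade. *)
Definition eta_rank (c : Idx S C) : nat :=
  match c with
  | idxV j => j.+3
  | idxY _ _ => 2
  | idxT _ => 1
  | _ => 0
  end.

Lemma cmterm_eqV n H T V V' L x y m i : V m = V' m -> V m.-1 = V' m.-1 ->
  cmterm S delta (State n H T V L x y) e m i = cmterm S delta (State n H T V' L x y) e m i.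
Proof.
move=> Vm Vm1; rewrite /cmterm /=.
case: ifP => [/eqP m1 | _]; first by rewrite -m1 Vm.
by case: ifP => [/eqP mS | _]; rewrite ?(esym mS) Vm Vm1.
Qed.

Lemma gcomp_bump r c s : c != r -> (eta_rank r <= eta_rank c)%N ->
  G r (Defs.bump S C c s z) = G r z.
Proof.
case: z => n H T V L x y.
case: r => [[[[j|[j i]]|j]|j]|k]; case: c => [[[[j'|[j' i']]|j']|j']|k'] //= cr rk.
- have nj : (j == j' :> nat) = false by apply/negbTE; apply: contraNneq cr => /val_inj ->.
  rewrite /aux /=; congr (_ / _); apply: eq_bigr => i _.
  by apply: cmterm_eqV; rewrite /upd /= ?(eqSS j j') ?nj ?(ltn_eqF (rk : (j < j'.+1)%N)).
- have nji : (j == j' :> nat) && (i == i' :> nat) = false.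
    by apply/negbTE; apply: contra cr => /andP[/eqP/val_inj-> /eqP/val_inj->].
  by rewrite /ydef /upd2 /= (eqSS j j') (eqSS i i') nji.
- have nj : (j == j' :> nat) = false by apply/negbTE; apply: contraNneq cr => /val_inj ->.
  by rewrite /edef /upd /= (eqSS j j') nj.
- have nj : (j == j' :> nat) = false by apply/negbTE; apply: contraNneq cr => /val_inj ->.
  by rewrite /xsum /upd2 /= (eqSS j j') nj.
- have nk : (k == k' :> nat) = false by apply/negbTE; apply: contraNneq cr => /val_inj ->.
  by rewrite /hold /upd /= (eqSS k k') nk.
Qed.

Lemma jac_entry_eq0 r c : c != r -> (eta_rank r <= eta_rank c)%N -> jac_entry r c = 0.
Proof.
move=> cr rk; rewrite /jac_entry (_ : (fun s => _) = cst (G r z)) ?derive1_cst //.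
by apply/funext => s; exact: gcomp_bump.
Qed.

Lemma det_jac_eta_neq0 : (forall r, jac_entry r r != 0) ->
  \det (jac_eta S C f_vle f_hl f_holdup delta e p z) != 0.
Proof.
move=> diag; apply: (@graded_det_neq0 R _ _ (eta_rank \o enum_val)) => [i | i j ji hij].
  by rewrite mxE; exact: diag.
by rewrite mxE; apply: jac_entry_eq0; rewrite // (inj_eq enum_val_inj).
Qed.

Lemma jac_entry_affine r c (b : R) :
  (forall s, G r (Defs.bump S C c s z) = G r z + b * s) -> jac_entry r c = b.
Proof. by move=> Gs; rewrite /jac_entry (funext Gs) derive1_affine. Qed.

Lemma jac_entry_xsum j : jac_entry (idxX j) (idxX j) = 1.
Proof.
apply: jac_entry_affine => s; case: z => n H T V L x y.
rewrite /= /xsum /upd2 /= !eqxx mul1r.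
rewrite (eq_big_nat _ _ (F2 := fun i => x j.+1 i)) => [|i /andP[_ iC]]; last by rewrite ltn_eqF.
by rewrite /=; ring.
Qed.

Lemma jac_entry_ydef j i : jac_entry (idxY j i) (idxY j i) = 1.
Proof.
apply: jac_entry_affine => s; case: z => n H T V L x y.
by rewrite /= /ydef /upd2 /= !eqxx /=; ring.
Qed.

Lemma jac_entry_edef j : C1 f_hl -> jac_entry (idxT j) (idxT j) =
  - st_n z j.+1 * (fun u => f_hl (u, xvec_of C z j.+1))^`()%classic (st_T z j.+1).
Proof.
move=> hl; rewrite /jac_entry; case: z => n H T V L x y.
rewrite -(@derive1_shift _ _ _ (H j.+1)).
  by congr derive1; apply/funext => s; rewrite /= /edef /upd /= eqxx mulNr.
exact: C1_derivable_fst.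
Qed.

Lemma jac_entry_hold k : C1 f_holdup ->
  jac_entry (idxL k) (idxL k) = - f_holdup^`()%classic (st_L z k.+1).
Proof.
move=> ho; rewrite /jac_entry; case: z => n H T V L x y.
rewrite -mulN1r -(@derive1_shift _ _ _ (n k.+2)).
  by congr derive1; apply/funext => s; rewrite /= /hold /upd /= eqxx mulN1r.
exact: C1_derivable.
Qed.

Lemma cmterm_bumpV n H T V L x y m i s : (0 < m)%N -> (1 < S)%N ->
  cmterm S delta (State n H T (upd V m s) L x y) e m i =
  cmterm S delta (State n H T V L x y) e m i
  - s * ((if m == S then e else 1) * (y m i - x m i - delta m i)).
Proof.
move=> m0 S2; rewrite /cmterm /upd /=.
case: ifP => [/eqP m1 | _]; first by rewrite m1 (ltn_eqF S2) /=; ring.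
have mm1 : (m.-1 == m) = false by rewrite ltn_eqF // prednK.
case: ifP => [/eqP mS | _]; first by rewrite -mS eqxx mm1; ring.
by rewrite eqxx mm1; ring.
Qed.

Lemma jac_entry_aux j : (1 < S)%N -> jac_entry (idxV j) (idxV j) =
  - ((if j.+1 == S then e else 1)
     * (total_y C z j.+1 - total_x C z j.+1 - dsum C delta j.+1) / st_n z j.+1).
Proof.
move=> S2; apply: jac_entry_affine => s; case: z => n H T V L x y.
rewrite /= /aux; under eq_bigr => i _ do rewrite cmterm_bumpV //.
by rewrite sumrB -mulr_sumr -mulr_sumr !sumrB /total_y /total_x /dsum; ring.
Qed.

Lemma jac_diag_neq0 : (1 < S)%N -> e != 0 -> C1 f_hl -> C1 f_holdup ->
  (forall j, (0 < j <= S)%N -> st_n z j != 0) ->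
  (forall j, (0 < j <= S)%N -> total_y C z j - total_x C z j - dsum C delta j != 0) ->
  (forall j, (0 < j <= S)%N ->
     (fun u => f_hl (u, xvec_of C z j))^`()%classic (st_T z j) != 0) ->
  (forall k, (0 < k < S)%N -> f_holdup^`()%classic (st_L z k) != 0) ->
  forall r, jac_entry r r != 0.
Proof.
move=> S2 e0 hl ho n0 E0 hl0 ho0 [[[[j|[j i]]|j]|j]|k].
- rewrite jac_entry_aux // oppr_eq0 !mulf_eq0 invr_eq0 !negb_or.
  rewrite (n0 j.+1 (ltn_ord j)) (E0 j.+1 (ltn_ord j)) !andbT.
  by case: ifP => _; rewrite ?oner_neq0.
- by rewrite jac_entry_ydef oner_neq0.
- rewrite jac_entry_edef // mulf_neq0 ?oppr_eq0 ?(n0 j.+1 (ltn_ord j)) //.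
  exact: (hl0 j.+1 (ltn_ord j)).
- by rewrite jac_entry_xsum oner_neq0.
- by rewrite jac_entry_hold // oppr_eq0 ho0 //= -ltn_predRL.
Qed.

End Jacobian.

Theorem mainTheorem6 (R : realType) (S C : nat) (I : interval R)
  (f_vle : nat -> R * R * 'rV[R]_C -> R) (f_hl : R * 'rV[R]_C -> R)
  (f_hv : R * 'rV[R]_C -> R) (f_holdup : R -> R)
  (eps P Q Tcond : R -> R)
  (delta : nat -> nat -> R)
  (n H T V L : nat -> R -> R) (x y : nat -> nat -> R -> R) :
  (2 <= S)%N -> (2 <= C)%N ->
  (* smoothness of the given functions and of the controls *)
  (forall i, (1 <= i <= C)%N -> C1 (f_vle i)) -> C1 f_hl -> C1 f_hv -> C1 f_holdup ->
  C1_on [set` I] eps -> C1_on [set` I] P -> C1_on [set` I] Q -> C1_on [set` I] Tcond ->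
  (* perturbation parameters *)
  (forall j i, (1 <= j <= S)%N -> (1 <= i <= C)%N -> 0 <= delta j i) ->
  0 < dsum C delta 1 ->
  (forall j, (1 <= j < S)%N -> dsum C delta j <= dsum C delta j.+1) ->
  let Z := fun t => State (fun j => n j t) (fun j => H j t) (fun j => T j t)
                          (fun j => V j t) (fun j => L j t)
                          (fun j i => x j i t) (fun j i => y j i t) in
  (* (xi, eta) is a solution of (P_delta) on I *)
  (forall j, (1 <= j <= S)%N ->
     [/\ C1_on [set` I] (n j), C1_on [set` I] (H j), C1_on [set` I] (T j)
       & C1_on [set` I] (V j)]) ->
  (forall j, (1 <= j < S)%N -> C1_on [set` I] (L j)) ->
  (forall j i, (1 <= j <= S)%N -> (1 <= i <= C)%N ->
     C1_on [set` I] (x j i) /\ C1_on [set` I] (y j i)) ->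
  (forall j, (1 <= j <= S)%N ->
     deriv_on [set` I] (n j) (fun t => rhs_n S (Z t) (eps t) j)) ->
  (forall j i, (1 <= j <= S)%N -> (1 <= i < C)%N ->
     deriv_on [set` I] (x j i) (fun t => rhs_x S delta (Z t) (eps t) j i)) ->
  (forall j, (1 <= j <= S)%N ->
     deriv_on [set` I] (H j) (fun t => rhs_H S C f_hl f_hv (Z t) (eps t) (Q t) (Tcond t) j)) ->
  (forall t, t \in I -> forall r : Idx S C,
     gcomp S C f_vle f_hl f_holdup delta (eps t) (P t) r (Z t) = 0) ->
  (* non-degeneracy assumptions along the solution *)
  (forall t, t \in I ->
     [/\ eps t != 0,
         (forall j, (1 <= j <= S)%N -> n j t != 0 /\ 0 < V j t),
         (forall j, (1 <= j < S)%N -> 0 < L j t /\ f_holdup^`() (L j t) != 0)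
       & (forall j, (1 <= j <= S)%N ->
            (fun s : R => f_hl (s, xvec_of C (Z t) j))^`() (T j t) != 0)]) ->
  forall t, t \in I ->
    [/\ \det (jac_eta S C f_vle f_hl f_holdup delta (eps t) (P t) (Z t)) != 0,
        (forall j, (1 <= j < S)%N ->
           \sum_(1 <= i < C.+1) y j i t =
             1 + dsum C delta j
             - (V j t)^-1 * (\sum_(1 <= k < j.+1) L k t * dsum C delta k
                             - \sum_(1 <= k < j) V k t * (dsum C delta k - dsum C delta k.+1)))
      & \sum_(1 <= i < C.+1) y S i t =
          1 + dsum C delta S
          - (eps t * V S t)^-1 * (\sum_(1 <= k < S) L k t * dsum C delta k
                                  - \sum_(1 <= k < S) V k t * (dsum C delta k - dsum C delta k.+1))].
Proof.
move=> S2 C2 _ hl _ ho _ _ _ _ _ d1_gt0 d_homo Z _ _ _ _ _ _ g0 nondeg t tI.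
have [e0 nV L_t hl_t] := nondeg t tI.
have n0 j : (0 < j <= S)%N -> st_n (Z t) j != 0 by move/nV => [].
have V_gt0 j : (0 < j <= S)%N -> 0 < st_V (Z t) j by move/nV => [].
have L_gt0 k : (0 < k < S)%N -> 0 < st_L (Z t) k by move/L_t => [].
have x1 : forall j, (0 < j <= S)%N -> total_x C (Z t) j = 1.
  by apply: forall_stage => j; exact: total_x_xsum (ltnW C2) (g0 t tI (inl (inr j))).
have cm0 : forall j, (0 < j <= S)%N ->
    \sum_(1 <= i < C.+1) cmterm S delta (Z t) (eps t) j i = 0.
  apply: forall_stage => j; have := g0 t tI (inl (inl (inl (inl j)))).
  by move/eqP; rewrite /= /aux mulf_eq0 invr_eq0 (negbTE (n0 j.+1 (ltn_ord j))) orbF => /eqP.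
have E0 j : (0 < j <= S)%N -> total_y C (Z t) j - 1 - dsum C delta j != 0.
  exact: (excess_neq0 (e := eps t)).
split.
- apply/det_jac_eta_neq0/jac_diag_neq0 => // [j hj | k hk]; first by rewrite x1 ?E0.
  exact: (L_t k hk).2.
- move=> j hj; have jS : (0 < j <= S)%N by case/andP: hj => -> /ltnW.
  exact: (total_y_stage S2 x1 cm0 hj (lt0r_neq0 (V_gt0 j jS))).
- have SS : (0 < S <= S)%N by rewrite leqnn andbT ltnW.
  exact: (total_y_last S2 x1 cm0 (mulf_neq0 e0 (lt0r_neq0 (V_gt0 S SS)))).
Qed.
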